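(* In the setting described in the context, with $\mathsf{LP}=\sum_{i\in\mathcal F,j\in\mathcal C}x_{i,j}d(i,j)$, $$\sum_{v\in\mathcal C^*}\ \sum_{i\in\mathcal U_v}\ \sum_{j\in\mathcal C,\,j\neq v}x_{i,j}\,d(j,v)\ \le\ 2(\ell+1)\,\mathsf{LP}.$$
   Context: Setting: finite sets $\mathcal F$ (facility locations) and $\mathcal C$ (clients), a metric $d$ on $\mathcal F\cup\mathcal C$, positive integers $k,u,\ell$, and real numbers $x_{i,j}\ge0$, $y_i\ge0$ with $\sum_{i\in\mathcal F}x_{i,j}=1$ for all $j\in\mathcal C$, $\sum_iy_i\le k$, $x_{i,j}\le y_i$, $\sum_jx_{i,j}\le uy_i$. Let $d_{av}(j)=\sum_{i\in\mathcal F}x_{i,j}d(i,j)$. Construction of $\mathcal C^*$: start with $\mathcal C^*=\emptyset$ and $R=\mathcal C$; while $R\ne\emptyset$, choose $v\in R$ with smallest $d_{av}(v)$, add $v$ to $\mathcal C^*$, and remove from $R$ all $j\in R$ with $d(j,v)\le2\ell d_{av}(j)$. Each $i\in\mathcal F$ is put into $\mathcal U_v$ for one $v\in\mathcal C^*$ closest to $i$ (ties arbitrary), so $\{\mathcal U_v\}$ partitions $\mathcal F$. (The left-hand side is the cost of moving, for every $v\in\mathcal C^*$, $i\in\mathcal U_v$, $j\ne v$, $x_{i,j}$ units of demand from $j$ to $v$.) *)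

From mathcomp Require Import all_boot all_order all_algebra.
Set Implicit Arguments. Unset Strict Implicit. Unset Printing Implicit Defensive.
Import Order.TTheory GRing.Theory Num.Theory.
Local Open Scope ring_scope.

Section Defs.
Variables (R : realFieldType) (Fac Cli : finType).
Notation P := (Fac + Cli)%type.

(* d is a metric on F ∪ C (pseudometric: we do not need d x y = 0 -> x = y). *)
Definition is_metric (d : P -> P -> R) : Prop :=
  [/\ forall p q, 0 <= d p q,
      forall p, d p p = 0,
      forall p q, d p q = d q p &
      forall p q r, d p r <= d p q + d q r].

Definition lp_feasible (k u : nat) (x : Fac -> Cli -> R) (y : Fac -> R) : Prop :=
  [/\ (forall i j, 0 <= x i j), (forall i, 0 <= y i),
      (forall j, \sum_(i : Fac) x i j = 1),
      \sum_(i : Fac) y i <= k%:R &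
      [/\ forall i j, x i j <= y i &
          forall i, \sum_(j : Cli) x i j <= u%:R * y i]].

Definition d_av (d : P -> P -> R) (x : Fac -> Cli -> R) (j : Cli) : R :=
  \sum_(i : Fac) x i j * d (inl i) (inr j).

Definition LPval (d : P -> P -> R) (x : Fac -> Cli -> R) : R :=
  \sum_(i : Fac) \sum_(j : Cli) x i j * d (inl i) (inr j).

(* Clients still in R after the centres in s have been chosen: j is removed
   by v when d(j,v) <= 2 l d_av(j). *)
Definition remaining (l : nat) (d : P -> P -> R) (x : Fac -> Cli -> R)
  (s : seq Cli) : {set Cli} :=
  [set j | all (fun v => 2%:R * l%:R * d_av d x j < d (inr j) (inr v)) s].

(* s = [v_1; ...; v_m] is a possible run (in order of choice) of the greedy
   construction of C*: each v_k is an element of the current R with smallest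
   d_av (ties arbitrary), and the process stops when R is empty. *)
Definition greedy_run (l : nat) (d : P -> P -> R) (x : Fac -> Cli -> R)
  (s : seq Cli) : Prop :=
  (forall n : nat, (n < size s)%N ->
     forall v0 : Cli, let v := nth v0 s n in
       v \in remaining l d x (take n s) /\
       (forall j, j \in remaining l d x (take n s) -> d_av d x v <= d_av d x j))
  /\ remaining l d x s = set0.

(* sigma i = the v in C* with i in U_v, chosen among the closest centres. *)
Definition closest_assignment (d : P -> P -> R) (s : seq Cli)
  (sigma : Fac -> Cli) : Prop :=
  forall i, sigma i \in s /\ (forall v, v \in s -> d (inl i) (inr (sigma i)) <= d (inl i) (inr v)).

End Defs.

From mathcomp Require Import all_boot all_order all_algebra.
From mathcomp Require Import ring lra.
Set Implicit Arguments. Unset Strict Implicit. Unset Printing Implicit Defensive.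
Import Order.TTheory GRing.Theory Num.Theory.
Local Open Scope ring_scope.

(* Every client j was removed from R by some centre v, so d(j,v) <= 2 l d_av(j).
   For a facility i, its closest centre sigma(i) is no farther from i than v,
   hence d(j, sigma i) <= d(j,i) + d(i,v) <= 2 d(i,j) + 2 l d_av(j).  Weighting
   by x_{i,j} and summing, the first term gives 2 LP and the second gives
   2 l sum_{i,j} x_{i,j} d_av(j) = 2 l LP, because sum_i x_{i,j} = 1.  Since a centre
   removes itself from R, the centres are distinct; hence the sets U_v
   partition the facilities and the left-hand side is at most this weighted
   sum. *)

Lemma uniq_nth_notin_take (T : eqType) (x0 : T) (s : seq T) :
  (forall n, (n < size s)%N -> nth x0 s n \notin take n s) -> uniq s.
Proof.
move=> fresh; rewrite -(take_size s).
elim: {-2}(size s) (leqnn (size s)) => [|n IHn] lt_n; first by rewrite take0.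
by rewrite (take_nth x0 lt_n) rcons_uniq fresh // IHn // ltnW.
Qed.

Lemma sum_over_preimages (V : nmodType) (I J : finType) (s : seq J)
    (sigma : I -> J) (F : I -> V) :
  uniq s -> (forall i, sigma i \in s) ->
  \sum_(v <- s) \sum_(i | sigma i == v) F i = \sum_i F i.
Proof.
move=> s_uniq sigma_s; rewrite big_uniq //.
by rewrite [RHS](partition_big sigma (fun v => v \in s)).
Qed.

Section Greedy.
Variables (R : realFieldType) (Fac Cli : finType).
Variables (d : (Fac + Cli)%type -> (Fac + Cli)%type -> R) (x : Fac -> Cli -> R).
Hypotheses (d_ge0 : forall p q, 0 <= d p q) (x_ge0 : forall i j, 0 <= x i j).

Lemma d_av_ge0 j : 0 <= d_av d x j.
Proof. by apply: sumr_ge0 => i _; rewrite mulr_ge0. Qed.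

Lemma center_notin_remaining l s v :
  d (inr v) (inr v) = 0 -> v \in s -> v \notin remaining l d x s.
Proof.
move=> dvv0 v_s; rewrite inE; apply/allPn; exists v => //.
by rewrite dvv0 -leNgt !mulr_ge0 ?d_av_ge0.
Qed.

Lemma greedy_run_uniq l s :
  (forall p, d p p = 0) -> greedy_run l d x s -> uniq s.
Proof.
move=> d_refl [run _]; case: s run => [//|v0 s'] run.
apply: (@uniq_nth_notin_take _ v0) => n lt_n; have [v_rem _] := run n lt_n v0.
by apply: contraL v_rem; apply: center_notin_remaining.
Qed.

Lemma greedy_run_covers l s j :
  greedy_run l d x s ->
  exists2 v, v \in s & d (inr j) (inr v) <= 2%:R * l%:R * d_av d x j.
Proof.
move=> [_ run_empty]; have : j \notin remaining l d x s by rewrite run_empty inE.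
by rewrite inE => /allPn [v v_s]; rewrite -leNgt; exists v.
Qed.

Lemma sum_weighted_d_av :
  (forall j, \sum_i x i j = 1) ->
  \sum_i \sum_j x i j * d_av d x j = LPval d x.
Proof.
move=> x_sum1; rewrite exchange_big /LPval [RHS]exchange_big /=.
by apply: eq_bigr => j _; rewrite -mulr_suml x_sum1 mul1r.
Qed.

Lemma sum_weighted_reassignment (c : R) :
  (forall j, \sum_i x i j = 1) ->
  \sum_i \sum_j x i j * (2%:R * d (inl i) (inr j) + 2%:R * c * d_av d x j)
    = 2%:R * (c + 1) * LPval d x.
Proof.
move=> x_sum1; have -> : 2%:R * (c + 1) * LPval d x
    = 2%:R * LPval d x + 2%:R * c * \sum_i \sum_j x i j * d_av d x j.
  by rewrite sum_weighted_d_av //; ring.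
rewrite /LPval !mulr_sumr -big_split /=; apply: eq_bigr => i _.
by rewrite !mulr_sumr -big_split /=; apply: eq_bigr => j _; ring.
Qed.

End Greedy.

Lemma dist_closest_center (R : realFieldType) (Fac Cli : finType)
    (d : (Fac + Cli)%type -> (Fac + Cli)%type -> R) s sigma i j v :
  is_metric d -> closest_assignment d s sigma -> v \in s ->
  d (inr j) (inr (sigma i)) <= 2%:R * d (inl i) (inr j) + d (inr j) (inr v).
Proof.
move=> [_ _ dC dT] closest v_s; have [_ /(_ v v_s) sigma_le] := closest i.
have := dT (inr j) (inl i) (inr (sigma i)); have := dT (inl i) (inr j) (inr v).
rewrite (dC (inr j) (inl i)); lra.
Qed.

Theorem lemma1 (R : realFieldType) (Fac Cli : finType)
  (d : (Fac + Cli)%type -> (Fac + Cli)%type -> R)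
  (k u l : nat) (x : Fac -> Cli -> R) (y : Fac -> R)
  (Cstar : seq Cli) (sigma : Fac -> Cli) :
  is_metric d ->
  (0 < k)%N -> (0 < u)%N -> (0 < l)%N ->
  lp_feasible k u x y ->
  greedy_run l d x Cstar ->
  closest_assignment d Cstar sigma ->
  \sum_(v <- Cstar) \sum_(i : Fac | sigma i == v) \sum_(j : Cli | j != v)
      x i j * d (inr j) (inr v)
    <= 2%:R * (l%:R + 1) * LPval d x.
Proof.
move=> d_metric _ _ _ [x_ge0 _ x_sum1 _ _] run closest.
have [d_ge0 d_refl _ _] := d_metric.
have d_near i j : d (inr j) (inr (sigma i))
    <= 2%:R * d (inl i) (inr j) + 2%:R * l%:R * d_av d x j.
  have [v v_s v_near] := greedy_run_covers j run.
  have := dist_closest_center i j d_metric closest v_s; lra.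
rewrite -(sum_weighted_reassignment d l%:R x_sum1).
have sigma_Cstar i : sigma i \in Cstar by have [] := closest i.
rewrite -(sum_over_preimages _ (greedy_run_uniq d_ge0 x_ge0 d_refl run) sigma_Cstar).
apply: ler_sum => v _; apply: ler_sum => i /eqP <-.
apply: (le_trans (y := \sum_j x i j * d (inr j) (inr (sigma i)))).
  by rewrite [leRHS](bigD1 (sigma i)) //= lerDr mulr_ge0.
by apply: ler_sum => j _; rewrite ler_wpM2l.
Qed.
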